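(* Let $\mathrm{stat}_1,\dots,\mathrm{stat}_m$ be statistics from $\{\mathrm{lmax},\mathrm{rmax},\mathrm{lmin},\mathrm{rmin}\}$, and let $I=\sum_{\pi}t^{|\pi|}z_1^{\mathrm{stat}_1(\pi)}\cdots z_m^{\mathrm{stat}_m(\pi)}$ over irreducible separable permutations and $R$ the same sum over reducible separable permutations. Let $\phi$ be either the reverse or the complement operation, and let $\mathrm{stat}'_1,\dots,\mathrm{stat}'_m$ be statistics such that $\mathrm{stat}'_i(\phi(\pi))=\mathrm{stat}_i(\pi)$ for all permutations $\pi$ and all $i$. Then $I-z_1\cdots z_mt$ and $R+z_1\cdots z_mt$ are the generating functions $\sum_\pi t^{|\pi|}z_1^{\mathrm{stat}'_1(\pi)}\cdots z_m^{\mathrm{stat}'_m(\pi)}$ over reducible and over irreducible separable permutations, respectively.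
   Context: A permutation of length $n$ is a word $\pi=\pi_1\cdots\pi_n$ containing each element of $[n]$ exactly once; $|\pi|=n$. Reverse: $r(\pi)=\pi_n\cdots\pi_1$; complement: $c(\pi)=(n+1-\pi_1)\cdots(n+1-\pi_n)$. For $\pi$ of length $m$, $\sigma$ of length $n$: $\pi\oplus\sigma=\pi_1\cdots\pi_m(\sigma_1+m)\cdots(\sigma_n+m)$, $\pi\ominus\sigma=(\pi_1+n)\cdots(\pi_m+n)\sigma_1\cdots\sigma_n$. Separable permutations are those of length $\ge1$ obtained from $1$ by repeatedly applying $\oplus,\ominus$ (equivalently, avoiding $2413$ and $3142$). The permutation $1$ is irreducible; a permutation of length $n\ge2$ is irreducible if there is no $i$, $2\le i\le n$, such that every element of $\pi_1\cdots\pi_{i-1}$ is less than every element of $\pi_i\cdots\pi_n$; reducible means not irreducible (length $\ge2$). $\pi_i$ is a left-to-right maximum (minimum) if $\pi_i>\pi_j$ ($\pi_i<\pi_j$) for all $j<i$, a right-to-left maximum (minimum) if $\pi_i>\pi_j$ ($\pi_i<\pi_j$) for all $j>i$; $\mathrm{lmax},\mathrm{lmin},\mathrm{rmax},\mathrm{rmin}$ count these. *)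

From mathcomp Require Import all_boot all_order all_algebra.
From mathcomp Require Import boolp.
Set Implicit Arguments. Unset Strict Implicit. Unset Printing Implicit Defensive.
Import GRing.Theory.
Local Open Scope ring_scope.

Definition is_perm (s : seq nat) : bool := perm_eq s (iota 1 (size s)).

Definition rev_perm (s : seq nat) : seq nat := rev s.
Definition compl_perm (s : seq nat) : seq nat := map (fun x => ((size s).+1 - x)%N) s.

Definition oplus (p q : seq nat) : seq nat := p ++ map (addn (size p)) q.
Definition ominus (p q : seq nat) : seq nat := map (addn (size q)) p ++ q.

Inductive separable : seq nat -> Prop :=
| sep_one : separable [:: 1%N]
| sep_oplus p q : separable p -> separable q -> separable (oplus p q)
| sep_ominus p q : separable p -> separable q -> separable (ominus p q).

Definition irreducible (s : seq nat) : bool :=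
  (size s == 1%N) ||
  ((2 <= size s)%N &&
   ~~ has (fun k => allrel (fun x y => (x < y)%N) (take k s) (drop k s))
          (iota 1 (size s).-1)).

Definition reducible (s : seq nat) : bool := (2 <= size s)%N && ~~ irreducible s.

Definition lmax (s : seq nat) : nat :=
  \sum_(i < size s) all (fun y => (y < nth 0 s i)%N) (take i s).
Definition lmin (s : seq nat) : nat :=
  \sum_(i < size s) all (fun y => (nth 0 s i < y)%N) (take i s).
Definition rmax (s : seq nat) : nat :=
  \sum_(i < size s) all (fun y => (y < nth 0 s i)%N) (drop i.+1 s).
Definition rmin (s : seq nat) : nat :=
  \sum_(i < size s) all (fun y => (nth 0 s i < y)%N) (drop i.+1 s).

Inductive stat_kind := Lmax | Rmax | Lmin | Rmin.

Definition eval_stat (k : stat_kind) : seq nat -> nat :=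
  match k with Lmax => lmax | Rmax => rmax | Lmin => lmin | Rmin => rmin end.

(* coefficient of t^n in  sum_{pi separable, P pi} t^|pi| z_1^{st_1 pi} ... z_m^{st_m pi},
   with the z_i evaluated in an arbitrary commutative ring *)
Definition gf_coef (R : comNzRingType) (m : nat) (z : 'I_m -> R)
    (st : 'I_m -> seq nat -> nat) (P : pred (seq nat)) (n : nat) : R :=
  \sum_(s <- permutations (iota 1 n) | `[< separable s >] && P s)
     \prod_(i < m) z i ^+ st i s.

From mathcomp Require Import all_boot all_order all_algebra.
From mathcomp Require Import boolp zify.
Import GRing.Theory.
Set Implicit Arguments. Unset Strict Implicit. Unset Printing Implicit Defensive.

(* A separable permutation of length at least 2 is either a direct sum, which
   is reducible and starts below its last letter, or a skew sum, which starts
   above its last letter and hence is irreducible.  So for such permutations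
   reducibility means "first letter < last letter".  Reverse and complement
   preserve separability and length, are involutions, and reverse this
   comparison; reindexing the sums by phi therefore swaps reducible and
   irreducible and turns stat' into stat.  Only the permutation 1, irreducible
   and fixed by phi, escapes this and yields the correction term z_1 ... z_m t. *)

Lemma head_rev T (x : T) s : head x (rev s) = last x s.
Proof. by case/lastP: s => [|s y]; rewrite ?rev_rcons ?last_rcons. Qed.

Lemma last_rev T (x : T) s : last x (rev s) = head x s.
Proof. by case: s => [|y s]; rewrite ?rev_cons ?last_rcons. Qed.

Lemma head_neq_last (T : eqType) (x : T) s :
  uniq s -> 1 < size s -> head x s != last x s.
Proof.
case: s => [|y [|w s]] //= /andP[y_notin _] _.
by apply: contraNneq y_notin => ->; apply: mem_last.
Qed.

Lemma perm_map_involutive_in (T : eqType) (f : T -> T) (s : seq T) :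
  uniq s -> {in s, forall x, f x \in s} -> {in s, involutive f} ->
  perm_eq (map f s) s.
Proof.
move=> s_uniq f_s fK; apply: uniq_perm => //.
  by rewrite map_inj_in_uniq // => x y xs ys fxy; rewrite -[x]fK // fxy fK.
move=> y; apply/mapP/idP => [[x xs ->]|ys]; first exact: f_s.
by exists (f y); rewrite ?f_s ?fK.
Qed.

Lemma is_perm_uniq s : is_perm s -> uniq s.
Proof. by move/perm_uniq->; apply: iota_uniq. Qed.

Lemma is_perm_mem s x : is_perm s -> x \in s -> 0 < x <= size s.
Proof. by move/perm_mem->; rewrite mem_iota; lia. Qed.

Lemma is_perm_oplus p q : is_perm p -> is_perm q -> is_perm (oplus p q).
Proof.
rewrite /is_perm /oplus size_cat size_map iotaD => pp pq.
by rewrite perm_cat // addnC iotaDl perm_map.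
Qed.

Lemma is_perm_ominus p q : is_perm p -> is_perm q -> is_perm (ominus p q).
Proof.
rewrite /is_perm /ominus size_cat size_map addnC iotaD => pp pq.
by rewrite perm_catC perm_cat // addnC iotaDl perm_map.
Qed.

Lemma separable_size_gt0 s : separable s -> 0 < size s.
Proof. by elim=> //= p q _ p_gt0 _ q_gt0; rewrite size_cat size_map; lia. Qed.

Lemma separable_is_perm s : separable s -> is_perm s.
Proof. by elim=> // p q _ pp _ pq; [apply: is_perm_oplus | apply: is_perm_ominus]. Qed.

Lemma irreducibleE s : 1 < size s -> irreducible s = ~~ reducible s.
Proof. by move=> s_gt1; rewrite /reducible s_gt1 negbK. Qed.

Lemma reducible_head_lt_last s : reducible s -> head 0 s < last 0 s.
Proof.
case/andP=> s_gt1; rewrite /irreducible gtn_eqF // s_gt1 /= negbK.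
case/hasP=> k; rewrite mem_iota => /andP[k_gt0 k_lt] /allrelP take_lt_drop.
rewrite -nth0 -nth_last.
have -> : nth 0 s 0 = nth 0 (take k s) 0 by rewrite nth_take.
have -> : nth 0 s (size s).-1 = nth 0 (drop k s) ((size s).-1 - k).
  by rewrite nth_drop subnKC //; lia.
have take_gt0 : 0 < size (take k s) by rewrite size_take_min; lia.
have drop_gt : (size s).-1 - k < size (drop k s) by rewrite size_drop; lia.
by apply: take_lt_drop; apply: mem_nth.
Qed.

Lemma reducible_oplus p q : is_perm p -> is_perm q ->
  0 < size p -> 0 < size q -> reducible (oplus p q).
Proof.
move=> pp pq p_gt0 q_gt0.
have s_gt1 : 1 < size (oplus p q) by rewrite size_cat size_map; lia.
rewrite /reducible /irreducible s_gt1 gtn_eqF //= negbK.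
apply/hasP; exists (size p); first by rewrite mem_iota size_cat size_map; lia.
rewrite take_size_cat ?drop_size_cat //; apply/allrelP => x _ xp /mapP[y yq ->].
by have := is_perm_mem pp xp; have := is_perm_mem pq yq; lia.
Qed.

Lemma last_lt_head_ominus p q : is_perm p -> is_perm q ->
  0 < size p -> 0 < size q -> last 0 (ominus p q) < head 0 (ominus p q).
Proof.
case: p => [//|x p] pp; case/lastP: q => [//|q y] pq _ _.
rewrite /ominus last_cat last_rcons /=.
have y_in : y \in rcons q y by rewrite mem_rcons mem_head.
by have := is_perm_mem pp (mem_head x p); have := is_perm_mem pq y_in; lia.
Qed.

Lemma separable_reducibleE s : separable s -> 1 < size s ->
  reducible s = (head 0 s < last 0 s).
Proof.
case=> [//|p q sp sq|p q sp sq] _.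
- have red := reducible_oplus (separable_is_perm sp) (separable_is_perm sq)
    (separable_size_gt0 sp) (separable_size_gt0 sq).
  by rewrite red (reducible_head_lt_last red).
- have last_lt_head := last_lt_head_ominus (separable_is_perm sp) (separable_is_perm sq)
    (separable_size_gt0 sp) (separable_size_gt0 sq).
  rewrite ltnNge (ltnW last_lt_head); apply/negP => /reducible_head_lt_last.
  by rewrite ltnNge (ltnW last_lt_head).
Qed.

Lemma rev_oplus p q : rev (oplus p q) = ominus (rev q) (rev p).
Proof. by rewrite /oplus /ominus rev_cat map_rev size_rev. Qed.

Lemma rev_ominus p q : rev (ominus p q) = oplus (rev q) (rev p).
Proof. by rewrite /oplus /ominus rev_cat map_rev size_rev. Qed.

Lemma separable_rev s : separable s -> separable (rev s).
Proof.
elim=> [|p q _ IHp _ IHq|p q _ IHp _ IHq]; first exact: sep_one.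
  by rewrite rev_oplus; apply: sep_ominus.
by rewrite rev_ominus; apply: sep_oplus.
Qed.

Lemma compl_oplus p q : is_perm p ->
  compl_perm (oplus p q) = ominus (compl_perm p) (compl_perm q).
Proof.
move=> pp; rewrite /compl_perm /oplus /ominus map_cat !size_cat !size_map -!map_comp.
congr (_ ++ _); last by apply/eq_map => y /=; lia.
by apply/eq_in_map => x xp /=; have := is_perm_mem pp xp; lia.
Qed.

Lemma compl_ominus p q : is_perm q ->
  compl_perm (ominus p q) = oplus (compl_perm p) (compl_perm q).
Proof.
move=> pq; rewrite /compl_perm /oplus /ominus map_cat !size_cat !size_map -!map_comp.
congr (_ ++ _); first by apply/eq_map => x /=; lia.
by apply/eq_in_map => y yq /=; have := is_perm_mem pq yq; lia.
Qed.

Lemma compl_permK s : is_perm s -> compl_perm (compl_perm s) = s.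
Proof.
move=> ps; rewrite /compl_perm size_map -map_comp -[RHS]map_id.
by apply/eq_in_map => x xs /=; have := is_perm_mem ps xs; lia.
Qed.

Lemma separable_compl s : separable s -> separable (compl_perm s).
Proof.
elim=> [|p q sp IHp sq IHq|p q sp IHp sq IHq]; first exact: sep_one.
  by rewrite compl_oplus ?separable_is_perm //; apply: sep_ominus.
by rewrite compl_ominus ?separable_is_perm //; apply: sep_oplus.
Qed.

Lemma reducible_rev s : separable s -> 1 < size s -> reducible (rev s) = irreducible s.
Proof.
move=> ss s_gt1; have srs := separable_rev ss.
have := head_neq_last 0 (is_perm_uniq (separable_is_perm ss)) s_gt1.
rewrite irreducibleE // !separable_reducibleE ?size_rev //.
by rewrite head_rev last_rev -leqNgt ltn_neqAle eq_sym => ->.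
Qed.

Lemma reducible_compl s : separable s -> 1 < size s ->
  reducible (compl_perm s) = irreducible s.
Proof.
move=> ss s_gt1; have scs := separable_compl ss; have ps := separable_is_perm ss.
have := head_neq_last 0 (is_perm_uniq ps) s_gt1.
rewrite irreducibleE // !separable_reducibleE ?size_map //.
case: s ss s_gt1 ps {scs} => [//|y s] _ _ ps /= /eqP neq; rewrite last_map.
move: (is_perm_mem ps (mem_head y s)) (is_perm_mem ps (mem_last y s)) => /= ? ?.
by apply/idP/negP; lia.
Qed.

Definition sep_perms n := [seq s <- permutations (iota 1 n) | `[< separable s >]].

Lemma mem_sep_perms n s : (s \in sep_perms n) = `[< separable s >] && (size s == n).
Proof.
rewrite mem_filter mem_permutations.
apply/andP/andP => [[ss s_perm]|[ss /eqP <-]]; split => //.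
  by rewrite (perm_size s_perm) size_iota.
exact/separable_is_perm/asboolP.
Qed.

Lemma sep_perms_uniq n : uniq (sep_perms n).
Proof. exact/filter_uniq/permutations_uniq. Qed.

Lemma eval_stat_one k : eval_stat k [:: 1%N] = 1%N.
Proof. by case: k; rewrite /= /lmax /rmax /lmin /rmin big_ord1. Qed.

Section Symmetry.
Variable phi : seq nat -> seq nat.
Hypothesis phi_rev_or_compl : phi = rev_perm \/ phi = compl_perm.

Lemma size_phi s : size (phi s) = size s.
Proof. by case: phi_rev_or_compl => ->; rewrite ?size_rev ?size_map. Qed.

Lemma separable_phi s : separable s -> separable (phi s).
Proof. by case: phi_rev_or_compl => ->; [apply: separable_rev | apply: separable_compl]. Qed.

Lemma phiK s : is_perm s -> phi (phi s) = s.
Proof. by case: phi_rev_or_compl => -> ps; [apply: revK | apply: compl_permK]. Qed.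

Lemma reducible_phi s : separable s -> 1 < size s -> reducible (phi s) = irreducible s.
Proof. by case: phi_rev_or_compl => ->; [apply: reducible_rev | apply: reducible_compl]. Qed.

Lemma irreducible_phi s : separable s -> 1 < size s -> irreducible (phi s) = reducible s.
Proof.
by move=> ss s_gt1; rewrite irreducibleE ?size_phi // reducible_phi // irreducibleE ?negbK.
Qed.

Lemma perm_map_phi_sep_perms n : perm_eq (map phi (sep_perms n)) (sep_perms n).
Proof.
apply: perm_map_involutive_in (sep_perms_uniq n) _ _ => s;
  rewrite mem_sep_perms => /andP[/asboolP ss sz].
  by rewrite mem_sep_perms size_phi sz (asboolT (separable_phi ss)).
exact/phiK/separable_is_perm.
Qed.

End Symmetry.

Local Open Scope ring_scope.

Section GeneratingFunction.
Variables (R : comNzRingType) (m : nat) (z : 'I_m -> R).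

Lemma gf_coefE st P n :
  gf_coef z st P n = \sum_(s <- sep_perms n | P s) \prod_(i < m) z i ^+ st i s.
Proof. by rewrite big_filter_cond. Qed.

Lemma eq_gf_coef st (P Q : pred (seq nat)) n :
  (forall s, separable s -> size s = n -> P s = Q s) ->
  gf_coef z st P n = gf_coef z st Q n.
Proof.
move=> PQ; rewrite !gf_coefE big_seq_cond [RHS]big_seq_cond; apply: eq_bigl => s.
case s_in: (s \in sep_perms n) => //=.
by move: s_in; rewrite mem_sep_perms => /andP[/asboolP ss /eqP sz]; apply: PQ.
Qed.

Lemma gf_coef1 st P :
  gf_coef z st P 1 = if P [:: 1%N] then \prod_(i < m) z i ^+ st i [:: 1%N] else 0.
Proof.
rewrite /gf_coef (_ : permutations _ = [:: [:: 1%N]]) // big_cons big_nil.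
by rewrite (asboolT sep_one) addr0.
Qed.

Lemma gf_coef_phi phi (st st' : 'I_m -> seq nat -> nat) P n :
  phi = rev_perm \/ phi = compl_perm ->
  (forall i s, is_perm s -> st' i (phi s) = st i s) ->
  gf_coef z st' P n = gf_coef z st (fun s => P (phi s)) n.
Proof.
move=> phi_rev_or_compl st'_phi.
rewrite !gf_coefE -(perm_big _ (perm_map_phi_sep_perms phi_rev_or_compl n)) big_map.
rewrite big_seq_cond [RHS]big_seq_cond; apply: eq_bigr => s /andP[s_in _].
move: s_in; rewrite mem_sep_perms => /andP[/asboolP ss _].
by apply: eq_bigr => i _; rewrite st'_phi ?separable_is_perm.
Qed.

End GeneratingFunction.

Theorem theorem11 (m : nat) (stat : 'I_m -> stat_kind)
    (phi : seq nat -> seq nat) (Hphi : phi = rev_perm \/ phi = compl_perm)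
    (stat' : 'I_m -> seq nat -> nat)
    (Hstat' : forall (i : 'I_m) (s : seq nat),
        is_perm s -> stat' i (phi s) = eval_stat (stat i) s)
    (R : comNzRingType) (z : 'I_m -> R) (n : nat) :
  gf_coef z stat' reducible n =
    gf_coef z (fun i => eval_stat (stat i)) irreducible n
    - (if n == 1%N then \prod_(i < m) z i else 0)
  /\
  gf_coef z stat' irreducible n =
    gf_coef z (fun i => eval_stat (stat i)) reducible n
    + (if n == 1%N then \prod_(i < m) z i else 0).
Proof.
rewrite !(gf_coef_phi _ _ _ Hphi Hstat').
have [-> | n_neq1] := eqVneq n 1%N.
  have phi1 : phi [:: 1%N] = [:: 1%N] by case: Hphi => ->.
  rewrite !gf_coef1 phi1 /reducible /irreducible /=.
  rewrite (eq_bigr (fun i => z i)) => [|i _]; last by rewrite eval_stat_one expr1.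
  by rewrite subrr add0r.
have sep_gt1 s : separable s -> size s = n -> (1 < size s)%N.
  by move=> ss sz; have := separable_size_gt0 ss; lia.
rewrite subr0 addr0; split; apply: eq_gf_coef => s ss sz.
  by rewrite (reducible_phi Hphi) ?sep_gt1.
by rewrite (irreducible_phi Hphi) ?sep_gt1.
Qed.
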